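(* Let $n\ge1$, $p$ a prime, $R\subset E_n$, $S\subset E_n$ nonempty, $T=T_{R,S}$ as in the context, and $t\in S$. (1) If $t\notin T$, then $\mathsf{gen}^{(t)}_{R,S}\in\mathcal{C}_{\mathsf{pHa},S}$. (2) If $t\in T$, then $\mathsf{gen}^{(t)}_{R,S}\in\bigcap_{j\in S}\mathcal{C}_{R,S\setminus\{j\}}$.
   Context: $E_n=\{1,\dots,n\}$, indices mod $n$; $e_i$ standard basis ($e_0=e_n$). $\delta_U^{(i)}=-1$ if $i\in U$, else $1$. $F^{(d)}_U(x)=\sum_{i=0}^{n-1}p^i\delta_U^{(d+i)}x_{d+i}$. For nonempty $S'\subset E_n$, $T_{R,S'}$ is the unique subset such that for each $i$ with $i+1\notin S'$: if $i\notin R$ exactly one of $i,i+1$ lies in $T_{R,S'}$, if $i\in R$ both or neither lie in it; and for each $i\in S'$, $i-1\in T_{R,S'}\iff i-1\in R$. Then $\mathcal{C}_{R,S'}=\{x\in\mathbb{Z}^n:F^{(i)}_{T_{R,S'}}(x)\le0\ \forall i\in S'\}$, and $\mathcal{C}_{R,\emptyset}=\mathbb{Z}^n$. With $T=T_{R,S}$, $\mathsf{gen}^{(t)}_{R,S}=\delta_T^{(t)}e_t-p\delta_R^{(t-1)}e_{t-1}$. Saturation of a submonoid $A\subset\mathbb{Z}^n$: $\{x: mx\in A\text{ for some }m\ge1\}$. $\mathsf{ha}^{(i)}_{R,S}=-\delta_S^{(i)}e_i-p\delta_R^{(i-1)}e_{i-1}$ and $\mathcal{C}_{\mathsf{pHa},S}$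 is the saturation of $\sum_{i\in S}\mathbb{N}\mathsf{ha}^{(i)}_{R,S}+\sum_{i\notin S}\mathbb{Z}\mathsf{ha}^{(i)}_{R,S}$. *)

From mathcomp Require Import all_boot all_order all_algebra.
Set Implicit Arguments. Unset Strict Implicit. Unset Printing Implicit Defensive.
Import Order.TTheory GRing.Theory Num.Theory.
Local Open Scope ring_scope.

(* Convention: E_n = {1,...,n} with indices mod n is encoded by 'I_n,
   the element k of E_n being the ordinal k mod n (so n, i.e. the index 0,
   is the ordinal 0, and e_0 = e_n automatically). *)

Definition shiftI n (d : 'I_n) (k : nat) : 'I_n := iter k (@ordS n) d.
Definition succI n (i : 'I_n) : 'I_n := ordS i.
Definition predI n (i : 'I_n) : 'I_n := ord_pred i.

Definition deltaU n (U : {set 'I_n}) (i : 'I_n) : int :=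
  if i \in U then -1 else 1.

Definition evec n (i : 'I_n) : 'rV[int]_n := delta_mx 0 i.

Definition Ffun (p : nat) n (U : {set 'I_n}) (d : 'I_n) (x : 'rV[int]_n) : int :=
  \sum_(i < n) (p ^ i)%:Z * deltaU U (shiftI d i) * x 0 (shiftI d i).

Definition isT n (R S' T : {set 'I_n}) : bool :=
  [forall i : 'I_n, (succI i \notin S') ==>
      (if i \in R then (i \in T) == (succI i \in T)
                  else (i \in T) != (succI i \in T))]
  && [forall i : 'I_n, (i \in S') ==> ((predI i \in T) == (predI i \in R))].

(* T_{R,S'} : the (unique) subset satisfying isT (default set0 if none) *)
Definition Tset n (R S' : {set 'I_n}) : {set 'I_n} :=
  odflt set0 [pick T : {set 'I_n} | isT R S' T].

Definition inC (p : nat) n (R S' : {set 'I_n}) (x : 'rV[int]_n) : Prop :=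
  if S' == set0 then True
  else forall i, i \in S' -> Ffun p (Tset R S') i x <= 0.

Definition gen (p : nat) n (R S : {set 'I_n}) (t : 'I_n) : 'rV[int]_n :=
  deltaU (Tset R S) t *: evec t - ((p%:Z) * deltaU R (predI t)) *: evec (predI t).

Definition ha (p : nat) n (R S : {set 'I_n}) (i : 'I_n) : 'rV[int]_n :=
  - (deltaU S i *: evec i) - ((p%:Z) * deltaU R (predI i)) *: evec (predI i).

(* membership in C_{pHa,S}: saturation of
   sum_{i in S} N ha^(i) + sum_{i notin S} Z ha^(i) *)
Definition inCpHa (p : nat) n (R S : {set 'I_n}) (x : 'rV[int]_n) : Prop :=
  exists m : nat, (0 < m)%N /\
    exists c : 'I_n -> int, (forall i, i \in S -> 0 <= c i) /\
      (m%:Z) *: x = \sum_(i < n) c i *: ha p R S i.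

(* For [t \notin T], [gen^(t)] is literally the generator [ha^(t)].  For
   [t \in T], [gen^(t) = -e_t - p delta_R(t-1) e_(t-1)], so with [a], [b] the
   offsets of [t], [t-1] from [d],
     [F^(d)_T'(gen^(t)) = -(p^a delta_T'(t) + p^(b+1) delta_R(t-1) delta_T'(t-1))].
   If [t \in S'], the rule defining [T'] at [t] makes the second sign [+1], and
   [a <= b+1]; if [t \notin S'], the rule at [t-1] gives
   [delta_R(t-1) delta_T'(t-1) = -delta_T'(t)], while [d \in S'] forces [d != t],
   hence [a = b+1] and the two terms cancel.  So [gen^(t)] lies in [C_(R,S')]
   for every [S'], not only for [S :\ j]. *)

From Pilot Require Import Defs.
From mathcomp Require Import all_boot all_order all_algebra.
From mathcomp Require Import ring zify.
Set Implicit Arguments. Unset Strict Implicit. Unset Printing Implicit Defensive.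
Import Order.TTheory GRing.Theory Num.Theory.

Section Offset.
Variable n : nat.
Implicit Types (d a : 'I_n) (k : nat).

Lemma shiftIS d k : shiftI d k.+1 = succI (shiftI d k).
Proof. by rewrite /shiftI iterS. Qed.

Lemma shiftISr d k : shiftI d k.+1 = shiftI (succI d) k.
Proof. by rewrite /shiftI iterSr. Qed.

Lemma predIK : cancel (@Defs.predI n) (@succI n).
Proof. exact: ord_predK. Qed.

Lemma shiftI_val d k : val (shiftI d k) = ((d + k) %% n)%N.
Proof.
elim: k => [|k IHk]; first by rewrite addn0 modn_small.
by rewrite shiftIS /= IHk -addn1 modnDml addn1 addnS.
Qed.

Lemma shiftI_period d : shiftI d n = d.
Proof. by apply: val_inj; rewrite shiftI_val modnDr modn_small. Qed.

Lemma shiftI_inj d : injective (fun k : 'I_n => shiftI d k).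
Proof.
move=> k1 k2 /(congr1 val); rewrite !shiftI_val => /eqP.
by rewrite eqn_modDl !modn_small // => /eqP/val_inj.
Qed.

Definition offset d : 'I_n -> 'I_n := invF (@shiftI_inj d).

Lemma offsetK d : cancel (offset d) (shiftI d).
Proof. exact: (f_invF (@shiftI_inj d)). Qed.

Lemma shiftIK d (k : 'I_n) : offset d (shiftI d k) = k.
Proof. exact: (invF_f (@shiftI_inj d)). Qed.

Lemma offset_inj d : injective (offset d).
Proof. exact: can_inj (offsetK d). Qed.

Lemma offset_id d : val (offset d d) = 0%N.
Proof.
have n_gt0 : (0 < n)%N := leq_ltn_trans (leq0n d) (ltn_ord d).
exact: (congr1 val (shiftIK d (Ordinal n_gt0))).
Qed.

Lemma offset_succ d a : d != succI a -> val (offset d (succI a)) = (offset d a).+1.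
Proof.
move=> d_neq; set k := offset d a.
have shift_k1 : shiftI d k.+1 = succI a by rewrite shiftIS offsetK.
have k1_lt : (k.+1 < n)%N.
  rewrite ltn_neqAle ltn_ord andbT; apply: contraNneq d_neq => k1n.
  by rewrite -shift_k1 k1n shiftI_period.
by rewrite -shift_k1 (shiftIK d (Ordinal k1_lt)).
Qed.

Lemma offset_succ_le d a : (offset d (succI a) <= (offset d a).+1)%N.
Proof.
have [->|d_neq] := eqVneq d (succI a); first by rewrite offset_id.
by rewrite offset_succ.
Qed.

End Offset.

Section CanonicalT.
Variables (n : nat) (R S : {set 'I_n}).

(* [tmem f i] decides [i \in T] by following the rule
   [i \in T = (i \notin R) (+) (succI i \in T)] forward until the next [j]
   with [succI j \in S], where [j \in T = j \in R]; [f] is fuel. *)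
Fixpoint tmem (f : nat) (i : 'I_n) : bool :=
  if f is f.+1 then
    if succI i \in S then i \in R else (i \notin R) (+) tmem f (succI i)
  else i \in R.

Lemma tmem_stable i k f : shiftI i k.+1 \in S -> (k <= f)%N -> tmem f i = tmem k i.
Proof.
elim: k i f => [|k IHk] i [|f] // S_next k_le /=.
  by rewrite S_next.
by rewrite shiftISr in S_next; rewrite (IHk _ _ S_next k_le).
Qed.

Lemma exists_next_in i : S != set0 -> exists2 k, (k < n)%N & shiftI i k.+1 \in S.
Proof.
case/set0Pn => s s_in; exists (offset i (Defs.predI s)) => //.
by rewrite shiftIS offsetK predIK.
Qed.

Definition Tcanon : {set 'I_n} := [set i | tmem n.+1 i].

Lemma Tcanon_isT : S != set0 -> Defs.isT R S Tcanon.
Proof.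
move=> S_neq0; apply/andP; split; apply/forallP => i; apply/implyP => i_S.
- have [k k_lt S_next] := exists_next_in (succI i) S_neq0.
  rewrite !inE [tmem n.+1 i]/= (negbTE i_S).
  rewrite (tmem_stable S_next (ltnW k_lt)) (tmem_stable S_next (leqW (ltnW k_lt))).
  by case: (i \in R); case: tmem.
- by rewrite !inE /= predIK i_S.
Qed.

Lemma Tset_isT : S != set0 -> Defs.isT R S (Tset R S).
Proof.
move=> S_neq0; rewrite /Tset; case: pickP => [T T_isT //|no_T].
by have := no_T Tcanon; rewrite Tcanon_isT.
Qed.

End CanonicalT.

Local Open Scope ring_scope.

Section Ffun.
Variables (p n : nat) (U : {set 'I_n}) (d : 'I_n).

Lemma Ffun_reindex (x : 'rV[int]_n) :
  Ffun p U d x = \sum_(a < n) (p ^ offset d a)%:Z * deltaU U a * x 0 a.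
Proof.
rewrite /Ffun (reindex_inj (@offset_inj _ d)).
by apply: eq_bigr => a _; rewrite offsetK.
Qed.

Lemma FfunB (x y : 'rV[int]_n) : Ffun p U d (x - y) = Ffun p U d x - Ffun p U d y.
Proof. by rewrite /Ffun -sumrB; apply: eq_bigr => i _; rewrite !mxE mulrBr. Qed.

Lemma FfunZ (c : int) (x : 'rV[int]_n) : Ffun p U d (c *: x) = c * Ffun p U d x.
Proof. by rewrite /Ffun mulr_sumr; apply: eq_bigr => i _; rewrite mxE mulrCA. Qed.

Lemma Ffun_evec (a : 'I_n) : Ffun p U d (evec a) = (p ^ offset d a)%:Z * deltaU U a.
Proof.
rewrite Ffun_reindex (bigD1 a) //= big1 => [|b b_neq]; rewrite /evec mxE /=.
  by rewrite eqxx mulr1 addr0.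
by rewrite (negbTE b_neq) mulr0.
Qed.

End Ffun.

Section SignRules.
Variables (n : nat) (R S' U : {set 'I_n}).
Hypothesis U_isT : Defs.isT R S' U.

Lemma deltaU_pred_in t : t \in S' -> deltaU R (Defs.predI t) * deltaU U (Defs.predI t) = 1.
Proof.
move=> t_in; case/andP: U_isT => _ /forallP/(_ t); rewrite t_in /= => /eqP.
by rewrite /deltaU => ->; case: (_ \in R).
Qed.

Lemma deltaU_pred_notin t :
  t \notin S' -> deltaU R (Defs.predI t) * deltaU U (Defs.predI t) = - deltaU U t.
Proof.
move=> t_notin; case/andP: U_isT => /forallP/(_ (Defs.predI t)).
rewrite predIK t_notin /= /deltaU => + _.
by case: (_ \in R); case: (_ \in U); case: (t \in U).
Qed.

End SignRules.

Lemma Ffun_gen_in_T (p n : nat) (R S U : {set 'I_n}) (d t : 'I_n) :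
  t \in Tset R S ->
  Ffun p U d (gen p R S t) =
    - ((p ^ offset d t)%:Z * deltaU U t
       + (p ^ (offset d (Defs.predI t)).+1)%:Z
         * (deltaU R (Defs.predI t) * deltaU U (Defs.predI t))).
Proof.
move=> t_T; rewrite /gen FfunB !FfunZ !Ffun_evec {1}/deltaU t_T expnS PoszM.
by ring.
Qed.

Lemma Ffun_gen_nonpos (p n : nat) (R S S' U : {set 'I_n}) (d t : 'I_n) :
  (0 < p)%N -> Defs.isT R S' U -> d \in S' -> t \in Tset R S ->
  Ffun p U d (gen p R S t) <= 0.
Proof.
move=> p_gt0 U_isT d_in t_T; rewrite Ffun_gen_in_T // oppr_le0.
have [t_in|t_notin] := boolP (t \in S').
- rewrite (deltaU_pred_in U_isT t_in) mulr1.
  have le_exp : (p ^ offset d t <= p ^ (offset d (Defs.predI t)).+1)%N.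
    by rewrite leq_pexp2l // -{1}(predIK t) offset_succ_le.
  by move: le_exp; rewrite /deltaU; case: (t \in U) => /=; lia.
- have d_neq : d != succI (Defs.predI t).
    by rewrite predIK; apply: contraNneq t_notin => <-.
  have offset_t : val (offset d t) = (offset d (Defs.predI t)).+1.
    by rewrite -(offset_succ d_neq) predIK.
  by rewrite (deltaU_pred_notin U_isT t_notin) offset_t mulrN addrN.
Qed.

Lemma gen_inC (p n : nat) (R S S' : {set 'I_n}) (t : 'I_n) :
  (0 < p)%N -> t \in Tset R S -> inC p R S' (gen p R S t).
Proof.
move=> p_gt0 t_T; rewrite /inC; case: ifPn => // S'_neq0 d d_in.
exact: Ffun_gen_nonpos p_gt0 (Tset_isT R S'_neq0) d_in t_T.
Qed.

Lemma gen_eq_ha (p n : nat) (R S : {set 'I_n}) (t : 'I_n) :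
  t \in S -> t \notin Tset R S -> gen p R S t = ha p R S t.
Proof.
move=> t_S t_notT.
by rewrite /gen /ha /deltaU (negbTE t_notT) t_S scale1r scaleN1r opprK.
Qed.

Lemma ha_inCpHa (p n : nat) (R S : {set 'I_n}) (i : 'I_n) : inCpHa p R S (ha p R S i).
Proof.
exists 1%N; split => //; exists (fun j => (j == i)%:R); split.
  by move=> j _; case: (j == i).
rewrite scale1r (bigD1 i) //= big1 => [|j /negbTE ->]; last by rewrite scale0r.
by rewrite eqxx scale1r addr0.
Qed.

Theorem mainTheorem16 (n p : nat) (R S : {set 'I_n}) (t : 'I_n) :
  (1 <= n)%N -> prime p -> S != set0 -> t \in S ->
  (t \notin Tset R S -> inCpHa p R S (gen p R S t)) /\
  (t \in Tset R S -> forall j, j \in S -> inC p R (S :\ j) (gen p R S t)).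
Proof.
move=> _ p_prime _ t_S; split => [t_notT | t_T j _].
- by rewrite gen_eq_ha //; apply: ha_inCpHa.
- exact: gen_inC (prime_gt0 p_prime) t_T.
Qed.
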